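(* Let $\mathbf{A}=(A_1,\ldots,A_n)$ be a POVM on $\mathbb{C}^2$. Then $\mathbf{A}$ is projective-simulable if and only if the pair $\{\mathbf{A},\bar{\mathbf{A}}\}$ is jointly measurable, where $\bar{\mathbf{A}}=(\bar A_1,\ldots,\bar A_n)$ with $\bar A_i=\mathrm{Tr}(A_i)\mathbb{I}-A_i$.
   Context: A POVM on $\mathbb{C}^d$ with $n$ outcomes is a tuple $\mathbf{A}=(A_1,\ldots,A_n)$ of positive semidefinite operators with $\sum_a A_a=\mathbb{I}$ (some effects may be zero); it is projective if all effects are projectors. Given a set $\mathcal{B}=\{\mathbf{B}^{(j)}\}_j$ of POVMs, a POVM $\mathbf{A}$ with $n$ outcomes is $\mathcal{B}$-simulable if there are a probability distribution $p(j)$ over (finitely many) elements of $\mathcal{B}$ and conditional probability distributions $q(i|j,i')$ (over $i\in\{1,\ldots,n\}$, for each $j$ and each outcome $i'$ of $\mathbf{B}^{(j)}$) such that $A_i=\sum_j p(j)\sum_{i'}q(i|j,i')B^{(j)}_{i'}$ for all $i$. $\mathbf{A}$ is projective-simulable if it is $\mathcal{B}$-simulable with $\mathcal{B}$ the set of all projective POVMs on $\mathbb{C}^d$. For a qubit operator $A=a\mathbb{I}+\vec v\cdot\vec\sigma$ ($\vec\sigma$ the Pauli matrices), the antipodal operator is $\bar A=a\mathbb{I}-\vec v\cdot\vec\sigma=\mathrm{Tr}(A)\mathbb{I}-A$. A pair of POVMs $\mathbf{A}$, $\mathbf{A}'$ is jointly measurable if there is a POVM $(M_{ab})$ with $\sum_b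 M_{ab}=A_a$ and $\sum_a M_{ab}=A'_b$ for all $a,b$. *)

(* Complex scalars: an arbitrary numClosedFieldType C
   (e.g. algC); the order on C is the usual partial order, so 0 <= x means
   x is real and nonnegative. *)
From HB Require Import structures.
From mathcomp Require Import all_boot all_order all_algebra.
Set Implicit Arguments. Unset Strict Implicit. Unset Printing Implicit Defensive.
Import Order.TTheory GRing.Theory Num.Theory.
Local Open Scope ring_scope.

Section QDefs.
Variable C : numClosedFieldType.

Definition adjmx (m n : nat) (A : 'M[C]_(m, n)) : 'M[C]_(n, m) := (map_mx Num.conj A)^T.

Definition psd (d : nat) (A : 'M[C]_d) : Prop :=
  adjmx A = A /\ forall v : 'cV[C]_d, 0 <= (adjmx v *m A *m v) 0 0.

Definition is_povm (d n : nat) (A : 'I_n -> 'M[C]_d) : Prop :=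
  (forall i, psd (A i)) /\ \sum_(i < n) A i = 1%:M.

Definition is_projective_povm (d n : nat) (A : 'I_n -> 'M[C]_d) : Prop :=
  is_povm A /\ forall i, A i *m A i = A i.

(* B-simulability with B = all projective POVMs on C^d: a finite family
   (indexed by 'I_m) of projective POVMs B j with k j outcomes, a probability
   distribution p on the family, and conditional distributions q j i' i. *)
Definition proj_simulable (d n : nat) (A : 'I_n -> 'M[C]_d) : Prop :=
  exists (m : nat) (k : 'I_m -> nat)
         (B : forall j : 'I_m, 'I_(k j) -> 'M[C]_d)
         (p : 'I_m -> C)
         (q : forall j : 'I_m, 'I_(k j) -> 'I_n -> C),
    (forall j, is_projective_povm (B j)) /\
    (forall j, 0 <= p j) /\ \sum_(j < m) p j = 1 /\
    (forall j i' i, 0 <= q j i' i) /\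
    (forall j i', \sum_(i < n) q j i' i = 1) /\
    (forall i, A i = \sum_(j < m) p j *: \sum_(i' < k j) q j i' i *: B j i').

Definition jointly_measurable (d n n' : nat)
    (A : 'I_n -> 'M[C]_d) (A' : 'I_n' -> 'M[C]_d) : Prop :=
  exists M : 'I_n -> 'I_n' -> 'M[C]_d,
    (forall a b, psd (M a b)) /\
    \sum_(a < n) \sum_(b < n') M a b = 1%:M /\
    (forall a, \sum_(b < n') M a b = A a) /\
    (forall b, \sum_(a < n) M a b = A' b).

Definition antipodal (d : nat) (A : 'M[C]_d) : 'M[C]_d := (\tr A)%:M - A.

End QDefs.

From HB Require Import structures.
From mathcomp Require Import all_boot all_order all_algebra.
From mathcomp Require Import ring.
Import Order.TTheory GRing.Theory Num.Theory.
Set Implicit Arguments.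
Unset Strict Implicit.
Unset Printing Implicit Defensive.
Local Open Scope ring_scope.

(* A qubit effect X >= 0 has eigenvalues t + r and t - r (t = Tr X / 2, r >= 0)
   on a rank-one projector P and on 1 - P; since Tr P = 1, the antipodal of X
   swaps the two eigenvalues.  Hence (δ_ia X + δ_ib X̄) / 2 is the mixture, with
   weights (t + r) / 2 and (t - r) / 2, of the measurement {P, 1 - P} relabelled
   as (a, b) and as (b, a).  Summing this over the effects M_ab of a joint
   observable of A and Ā, and using that the antipodal is an involution on
   qubits, writes A as a mixture of projective measurements.
   Conversely, a projective qubit measurement B is jointly measurable with B̄
   through M_i'i'' = (Tr B_i'' - δ_i'i'') B_i', which is positive because
   (Tr P - 1) P = det P ∈ {0, 1} for a 2 x 2 projector P; joint measurability
   is kept under classical post-processing and mixing, and the antipodal map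
   is linear. *)

Lemma big_ord2 (V : nmodType) (F : 'I_2 -> V) : \sum_(i < 2) F i = F 0 + F 1.
Proof. by rewrite big_ord_recl big_ord1; congr (_ + F _); exact: val_inj. Qed.

Lemma ord2P (i : 'I_2) : i = 0 \/ i = 1.
Proof. by case: i => [[|[|]]] // ?; [left|right]; apply: val_inj. Qed.

Section TwoByTwo.
Variable R : comNzRingType.
Implicit Types X P : 'M[R]_2.

Lemma det_mx22 X : \det X = X 0 0 * X 1 1 - X 0 1 * X 1 0.
Proof.
rewrite (expand_det_row _ 0) big_ord2 /cofactor !det_mx11 !mxE /=.
rewrite expr0 expr1 mul1r mulN1r mulrN.
by congr (X _ _ * X _ _ - X _ _ * X _ _); apply: val_inj.
Qed.

Lemma Cayley_Hamilton22 X : X *m X = \tr X *: X - (\det X)%:M.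
Proof.
apply/matrixP => i j; rewrite !mxE big_ord2 det_mx22 /mxtrace big_ord2.
by case: (ord2P i) => ->; case: (ord2P j) => -> /=; ring.
Qed.

Lemma traceless22_sqr X : \tr X = 0 -> X *m X = (- \det X)%:M.
Proof. by move=> tr0; rewrite Cayley_Hamilton22 tr0 scale0r sub0r raddfN. Qed.

Lemma idempotent22_tr_sub1 P : P *m P = P -> (\tr P - 1) *: P = (\det P)%:M.
Proof.
move=> PP; apply/eqP; rewrite scalerBl scale1r subr_eq addrC -subr_eq.
by rewrite -Cayley_Hamilton22 PP.
Qed.

End TwoByTwo.

Lemma idempotent_det (R : idomainType) n (P : 'M[R]_n) :
  P *m P = P -> \det P = 0 \/ \det P = 1.
Proof.
move=> PP; have : \det P * (\det P - 1) == 0 by rewrite mulrBr mulr1 -det_mulmx PP subrr.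
by rewrite mulf_eq0 subr_eq0 => /orP[] /eqP; [left|right].
Qed.

Section Adjoint.
Variable C : numClosedFieldType.

Lemma adjmxD m n (A B : 'M[C]_(m, n)) : adjmx (A + B) = adjmx A + adjmx B.
Proof. by apply/matrixP => i j; rewrite !mxE rmorphD. Qed.

Lemma adjmxN m n (A : 'M[C]_(m, n)) : adjmx (- A) = - adjmx A.
Proof. by apply/matrixP => i j; rewrite !mxE rmorphN. Qed.

Lemma adjmxB m n (A B : 'M[C]_(m, n)) : adjmx (A - B) = adjmx A - adjmx B.
Proof. by rewrite adjmxD adjmxN. Qed.

Lemma adjmxZ m n (a : C) (A : 'M[C]_(m, n)) : adjmx (a *: A) = a^* *: adjmx A.
Proof. by apply/matrixP => i j; rewrite !mxE rmorphM. Qed.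

Lemma adjmxM m n p (A : 'M[C]_(m, n)) (B : 'M[C]_(n, p)) :
  adjmx (A *m B) = adjmx B *m adjmx A.
Proof. by rewrite /adjmx map_mxM trmx_mul. Qed.

Lemma adjmx_scalar n (a : C) : adjmx (a%:M : 'M_n) = a^*%:M.
Proof. by apply/matrixP => i j; rewrite !mxE eq_sym rmorphMn. Qed.

Lemma mxtrace_adjmx n (A : 'M[C]_n) : \tr (adjmx A) = (\tr A)^*.
Proof. by rewrite rmorph_sum; apply: eq_bigr => i _; rewrite !mxE. Qed.

Lemma adjmx_mulmx_diag m n (A : 'M[C]_(m, n)) j :
  (adjmx A *m A) j j = \sum_i `|A i j| ^+ 2.
Proof. by rewrite mxE; apply: eq_bigr => i _; rewrite !mxE normCKC. Qed.

Lemma adjmx_mulmx_diag_ge0 m n (A : 'M[C]_(m, n)) j : 0 <= (adjmx A *m A) j j.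
Proof. by rewrite adjmx_mulmx_diag sumr_ge0 // => i _; rewrite exprn_ge0. Qed.

Lemma adjmx_mulmx_diag_eq0 m n (A : 'M[C]_(m, n)) j :
  (adjmx A *m A) j j = 0 -> forall i, A i j = 0.
Proof.
rewrite adjmx_mulmx_diag => /psumr_eq0P A0 i.
by apply/eqP; rewrite -normr_eq0 -sqrf_eq0 A0 // => k _; rewrite exprn_ge0.
Qed.

Lemma adjmx_mulmx_eq0 m n (A : 'M[C]_(m, n)) : adjmx A *m A = 0 -> A = 0.
Proof.
move=> AA0; apply/matrixP => i j; rewrite mxE.
by apply: adjmx_mulmx_diag_eq0; rewrite AA0 mxE.
Qed.

End Adjoint.

Section Psd.
Variables (C : numClosedFieldType) (d : nat).
Implicit Types (X Y P : 'M[C]_d) (v : 'cV[C]_d).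

Definition orthoprojector P := adjmx P = P /\ P *m P = P.

Lemma psd_hermitian X : psd X -> adjmx X = X.
Proof. by case. Qed.

Lemma psd0 : psd (0 : 'M[C]_d).
Proof.
split; first by apply/matrixP => i j; rewrite !mxE rmorph0.
by move=> v; rewrite mulmx0 mul0mx mxE.
Qed.

Lemma psdD X Y : psd X -> psd Y -> psd (X + Y).
Proof.
move=> [hX qX] [hY qY]; split; first by rewrite adjmxD hX hY.
by move=> v; rewrite mulmxDr mulmxDl mxE addr_ge0.
Qed.

Lemma psdZ (a : C) X : 0 <= a -> psd X -> psd (a *: X).
Proof.
move=> a0 [hX qX]; split; first by rewrite adjmxZ hX conj_Creal ?ger0_real.
by move=> v; rewrite -scalemxAr -scalemxAl mxE mulr_ge0.
Qed.

Lemma psd_sum (I : Type) (r : seq I) (Q : pred I) (F : I -> 'M[C]_d) :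
  (forall i, Q i -> psd (F i)) -> psd (\sum_(i <- r | Q i) F i).
Proof. by move=> F_psd; elim/big_rec: _ => [|i X Qi]; [exact: psd0 | exact/psdD/F_psd]. Qed.

Lemma psd_scalar (a : C) : 0 <= a -> psd (a%:M : 'M_d).
Proof.
move=> a0; split; first by rewrite adjmx_scalar conj_Creal ?ger0_real.
by move=> v; rewrite mul_mx_scalar -scalemxAl mxE mulr_ge0 ?adjmx_mulmx_diag_ge0.
Qed.

Lemma orthoprojector_psd P : orthoprojector P -> psd P.
Proof.
move=> [hP PP]; split=> // v.
by rewrite -{1}PP -{1}hP mulmxA -adjmxM -mulmxA adjmx_mulmx_diag_ge0.
Qed.

Lemma orthoprojector0 : orthoprojector 0.
Proof. by split; [case: psd0 | rewrite mul0mx]. Qed.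

Lemma orthoprojector1 : orthoprojector 1%:M.
Proof. by split; [rewrite adjmx_scalar rmorph1 | rewrite mul1mx]. Qed.

Lemma orthoprojectorC P : orthoprojector P -> orthoprojector (1%:M - P).
Proof.
move=> [hP PP]; split; first by rewrite adjmxB hP adjmx_scalar rmorph1.
by rewrite mulmxBl mul1mx mulmxBr mulmx1 PP subrr subr0.
Qed.

Lemma orthoprojector_tr_ge0 P : orthoprojector P -> 0 <= \tr P.
Proof.
by move=> [hP PP]; rewrite -{1}PP -{1}hP sumr_ge0 // => i _; exact: adjmx_mulmx_diag_ge0.
Qed.

Lemma psd_eigenvalue_ge0 X P (a b : C) :
  psd X -> P *m P = P -> P != 0 -> X = a *: P + b *: (1%:M - P) -> 0 <= a.
Proof.
move=> [_ qX] PP P_neq0 defX.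
have /existsP [j v_neq0] : [exists j, col j P != 0].
  apply: contraNT P_neq0; rewrite negb_exists => /forallP cols0.
  apply/eqP/matrixP => i j; move: (negbNE (cols0 j)) => /eqP/matrixP/(_ i 0).
  by rewrite !mxE.
pose v := col j P.
have Pv : P *m v = v by rewrite /v !colE mulmxA PP.
have Xv : X *m v = a *: v.
  by rewrite defX mulmxDl -!scalemxAl mulmxBl mul1mx Pv subrr scaler0 addr0.
have vv_gt0 : 0 < (adjmx v *m v) 0 0.
  rewrite lt_def adjmx_mulmx_diag_ge0 andbT; apply: contra v_neq0 => /eqP vv0.
  by apply/eqP/matrixP => i k; rewrite (ord1 k) (adjmx_mulmx_diag_eq0 vv0 i) mxE.
by move: (qX v); rewrite -mulmxA Xv -scalemxAr mxE pmulr_lge0.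
Qed.

End Psd.

Section Antipodal.
Variables (C : numClosedFieldType) (d : nat).

Fact antipodal_is_semilinear : semilinear (@antipodal C d).
Proof.
split=> [a X | X Y]; rewrite /antipodal.
  by rewrite mxtraceZ scalerBr scale_scalar_mx.
by rewrite mxtraceD raddfD /= opprD addrACA.
Qed.

HB.instance Definition _ :=
  GRing.isSemilinear.Build C 'M[C]_d 'M[C]_d _ (@antipodal C d) antipodal_is_semilinear.

Lemma antipodal_tr1 (P : 'M[C]_d) : \tr P = 1 -> antipodal P = 1%:M - P.
Proof. by rewrite /antipodal => ->. Qed.

End Antipodal.

Lemma antipodalK (C : numClosedFieldType) (X : 'M[C]_2) : antipodal (antipodal X) = X.
Proof.
rewrite {1}/antipodal linearB /= mxtrace_scalar mulr2n addrK.
by rewrite /antipodal opprB addrC subrK.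
Qed.

Lemma involution_halfD1_idem (F : numFieldType) n (Q : 'M[F]_n) :
  Q *m Q = 1%:M -> (2^-1 *: (1%:M + Q)) *m (2^-1 *: (1%:M + Q)) = 2^-1 *: (1%:M + Q).
Proof.
move=> QQ; rewrite -scalemxAl -scalemxAr scalerA mulmxDl !mulmxDr !mul1mx mulmx1 QQ.
rewrite [Q + _]addrC -mulr2n -scaler_nat scalerA -mulrA mulVf ?mulr1 //.
by rewrite pnatr_eq0.
Qed.

Section QubitSpectral.
Variable C : numClosedFieldType.
Implicit Types X : 'M[C]_2.

Definition qubit_radius X : C := sqrtC (- \det (X - (\tr X / 2)%:M)).

(* By Cayley-Hamilton (X - t)^2 = r^2, so for r != 0 this is the eigenprojector
   of X for t + r; for r = 0, X is scalar and any rank-one projector will do. *)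
Definition qubit_eigenproj X : 'M[C]_2 :=
  let r := qubit_radius X in
  if r == 0 then delta_mx 0 0 else 2^-1 *: (1%:M + r^-1 *: (X - (\tr X / 2)%:M)).

Variable X : 'M[C]_2.

Local Notation t := (\tr X / 2).
Local Notation r := (qubit_radius X).
Local Notation P := (qubit_eigenproj X).

Let centered_traceless : \tr (X - t%:M) = 0.
Proof. by rewrite linearB /= mxtrace_scalar mulr2n -splitr subrr. Qed.

Lemma mxtrace_qubit_eigenproj : \tr P = 1.
Proof.
rewrite /qubit_eigenproj; case: eqP => [_ | /eqP r_neq0].
  by rewrite /mxtrace big_ord2 !mxE /= addr0.
by rewrite mxtraceZ mxtraceD mxtraceZ centered_traceless mulr0 addr0 mxtrace1 mulVf ?pnatr_eq0.
Qed.

Hypothesis hermX : adjmx X = X.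

Let t_real : t^* = t.
Proof. by rewrite fmorph_div rmorph_nat -{2}hermX mxtrace_adjmx. Qed.

Let centered_hermitian : adjmx (X - t%:M) = X - t%:M.
Proof. by rewrite adjmxB adjmx_scalar t_real hermX. Qed.

Let centered_sqr : (X - t%:M) *m (X - t%:M) = (r ^+ 2)%:M.
Proof. by rewrite sqrtCK traceless22_sqr. Qed.

Lemma qubit_radius_ge0 : 0 <= r.
Proof.
rewrite sqrtC_ge0; have := adjmx_mulmx_diag_ge0 (X - t%:M) 0.
by rewrite centered_hermitian traceless22_sqr // mxE mulr1n.
Qed.

Let r_real : r^* = r.
Proof. by rewrite conj_Creal // ger0_real // qubit_radius_ge0. Qed.

Let centered_eq0 : r = 0 -> X - t%:M = 0.
Proof.
move=> r0; apply: adjmx_mulmx_eq0.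
by rewrite centered_hermitian centered_sqr r0 expr0n /= raddf0.
Qed.

Lemma qubit_eigenproj_orthoprojector : orthoprojector P.
Proof.
rewrite /qubit_eigenproj; case: eqP => [_ | /eqP r_neq0].
  split; last by rewrite mul_delta_mx.
  by apply/matrixP => i j; rewrite !mxE rmorph_nat andbC.
split.
  rewrite adjmxZ adjmxD adjmx_scalar adjmxZ centered_hermitian !fmorphV /=.
  by rewrite r_real rmorph1 rmorph_nat.
apply: involution_halfD1_idem.
rewrite -scalemxAl -scalemxAr scalerA centered_sqr scale_scalar_mx -invfM -expr2.
by rewrite mulVf // expf_neq0.
Qed.

Lemma qubit_spectral : X = (t + r) *: P + (t - r) *: (1%:M - P).
Proof.
rewrite /qubit_eigenproj; case: eqP => [r0 | /eqP r_neq0].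
  rewrite r0 addr0 subr0 -scalerDr addrC subrK scalemx1.
  by apply/eqP; rewrite -subr_eq0 centered_eq0.
apply/matrixP => i j; rewrite !mxE.
by case: (ord2P i) => ->; case: (ord2P j) => -> /=; field.
Qed.

Lemma qubit_spectral_antipodal :
  antipodal X = (t - r) *: P + (t + r) *: (1%:M - P).
Proof.
have antiP : antipodal P = 1%:M - P by rewrite antipodal_tr1 ?mxtrace_qubit_eigenproj.
by rewrite {1}qubit_spectral linearD !linearZ /= -antiP antipodalK antiP addrC.
Qed.

End QubitSpectral.

Lemma psd_qubit_eigenvalues_ge0 (C : numClosedFieldType) (X : 'M[C]_2) :
  psd X -> 0 <= \tr X / 2 + qubit_radius X /\ 0 <= \tr X / 2 - qubit_radius X.
Proof.
move=> psdX; have hermX := psd_hermitian psdX.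
have [_ PP] := qubit_eigenproj_orthoprojector hermX.
have trP := mxtrace_qubit_eigenproj X.
have defX := qubit_spectral hermX.
have neq0_of_tr1 (Q : 'M[C]_2) : \tr Q = 1 -> Q != 0.
  by move=> trQ; apply: contra_eq_neq trQ => ->; rewrite mxtrace0 eq_sym oner_neq0.
split.
  by apply: psd_eigenvalue_ge0 psdX PP (neq0_of_tr1 _ trP) defX.
have [_ PPc] := orthoprojectorC (qubit_eigenproj_orthoprojector hermX).
apply: psd_eigenvalue_ge0 psdX PPc _ _.
  by apply: neq0_of_tr1; rewrite linearB /= mxtrace1 trP mulr2n addrK.
by rewrite subKr addrC; exact: defX.
Qed.

Lemma sumr_indicatorZ (R : pzRingType) (V : lmodType R) (I : finType) (a : I) (F : I -> V) :
  \sum_i (i == a)%:R *: F i = F a.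
Proof.
rewrite (bigD1 a) //= eqxx scale1r big1 ?addr0 // => i /negPf ->.
by rewrite scale0r.
Qed.

Lemma sumr_indicator (R : pzSemiRingType) (I : finType) (a : I) :
  \sum_i (i == a)%:R = 1 :> R.
Proof. by rewrite (bigD1 a) //= eqxx big1 ?addr0 // => i /negPf ->. Qed.

Lemma sum_pair_bool (V : nmodType) (I J : finType) (F : I -> J -> bool -> V) :
  \sum_(x : I * J * bool) F x.1.1 x.1.2 x.2 = \sum_i \sum_j (F i j true + F i j false).
Proof.
rewrite -(pair_bigA _ (fun ij (o : bool) => F ij.1 ij.2 o)).
rewrite (pair_bigA _ (fun i j => F i j true + F i j false)).
by apply: eq_bigr => ij _; rewrite big_bool.
Qed.

Section ProjectiveSimulation.
Variables (C : numClosedFieldType) (d n : nat).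

Definition binary_povm (P : 'M[C]_d) (a b : 'I_n) : 'I_n -> 'M[C]_d :=
  fun i => (i == a)%:R *: P + (i == b)%:R *: (1%:M - P).

Lemma binary_povm_projective P a b :
  orthoprojector P -> is_projective_povm (binary_povm P a b).
Proof.
move=> projP.
have effect_proj i : orthoprojector (binary_povm P a b i).
  rewrite /binary_povm; case: (i == a); case: (i == b);
    rewrite ?scale1r ?scale0r ?addr0 ?add0r.
  - by rewrite addrC subrK; exact: orthoprojector1.
  - exact: projP.
  - exact: orthoprojectorC.
  - exact: orthoprojector0.
split; last by move=> i; case: (effect_proj i).
split; first by move=> i; exact/orthoprojector_psd/effect_proj.
by rewrite big_split /= !sumr_indicatorZ addrC subrK.
Qed.

Lemma proj_simulable_mixture (T : finType) (p : T -> C) (B : T -> 'I_n -> 'M[C]_d)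
    (A : 'I_n -> 'M[C]_d) :
  (forall x, is_projective_povm (B x)) -> (forall x, 0 <= p x) -> \sum_x p x = 1 ->
  (forall i, A i = \sum_x p x *: B x i) -> proj_simulable A.
Proof.
move=> projB p_ge0 p_sum defA.
exists #|T|, (fun=> n), (fun j => B (enum_val j)), (fun j => p (enum_val j)),
  (fun _ i' i => (i == i')%:R).
do !split=> //.
- by rewrite -(big_enum_val (A := predT)).
- by move=> j i'; rewrite -[RHS](sumr_indicator _ i'); apply: eq_bigr => i _; rewrite eq_sym.
- move=> i; rewrite defA (big_enum_val (A := predT)); apply: eq_bigr => j _.
  congr (_ *: _); rewrite -[LHS](sumr_indicatorZ i (B (enum_val j))).
  by apply: eq_bigr => i' _; rewrite eq_sym.
Qed.

Lemma binary_povm_mixture (P : 'M[C]_d) (x y : C) (a b i : 'I_n) :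
  (x / 2) *: binary_povm P a b i + (y / 2) *: binary_povm P b a i =
  2^-1 *: ((i == a)%:R *: (x *: P + y *: (1%:M - P)) +
           (i == b)%:R *: (y *: P + x *: (1%:M - P))).
Proof. by apply/matrixP => u v; rewrite !mxE; ring. Qed.

End ProjectiveSimulation.

Lemma binary_povm_qubit_mixture (C : numClosedFieldType) n (X : 'M[C]_2) (a b i : 'I_n) :
  adjmx X = X ->
  let t := \tr X / 2 in let r := qubit_radius X in let P := qubit_eigenproj X in
  ((t + r) / 2) *: binary_povm P a b i + ((t - r) / 2) *: binary_povm P b a i =
  2^-1 *: ((i == a)%:R *: X + (i == b)%:R *: antipodal X).
Proof.
move=> hermX /=.
by rewrite binary_povm_mixture -(qubit_spectral hermX) -(qubit_spectral_antipodal hermX).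
Qed.

Lemma antipodal_marginals_average (C : numClosedFieldType) n
    (M : 'I_n -> 'I_n -> 'M[C]_2) (A : 'I_n -> 'M[C]_2) i :
  (forall a, \sum_b M a b = A a) -> (forall b, \sum_a M a b = antipodal (A b)) ->
  \sum_a \sum_b 2^-1 *: ((i == a)%:R *: M a b + (i == b)%:R *: antipodal (M a b)) = A i.
Proof.
move=> rowM colM.
rewrite (eq_bigr (fun a => 2^-1 *: ((a == i)%:R *: A a +
                   \sum_b (b == i)%:R *: antipodal (M a b)))); last first.
  move=> a _; rewrite -scaler_sumr big_split /= -scaler_sumr rowM eq_sym.
  by congr (_ *: (_ + _)); apply: eq_bigr => b _; rewrite eq_sym.
rewrite -scaler_sumr big_split /= sumr_indicatorZ exchange_big /=.
rewrite (eq_bigr (fun b => (b == i)%:R *: antipodal (antipodal (A b)))); last first.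
  by move=> b _; rewrite -scaler_sumr -linear_sum colM.
by rewrite sumr_indicatorZ antipodalK -mulr2n -scaler_nat scalerA mulVf ?scale1r ?pnatr_eq0.
Qed.

Lemma jointly_measurable_proj_simulable (C : numClosedFieldType) n (A : 'I_n -> 'M[C]_2) :
  jointly_measurable A (fun i => antipodal (A i)) -> proj_simulable A.
Proof.
case=> M [psdM [sumM [rowM colM]]].
have hermM a b := psd_hermitian (psdM a b).
pose t a b := \tr (M a b) / 2; pose r a b := qubit_radius (M a b).
pose w a b (o : bool) := (if o then t a b + r a b else t a b - r a b) / 2.
pose E a b (o : bool) := let P := qubit_eigenproj (M a b) in
  if o then binary_povm P a b else binary_povm P b a.
apply: (proj_simulable_mixture (p := fun x : 'I_n * 'I_n * bool => w x.1.1 x.1.2 x.2)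
                               (B := fun x => E x.1.1 x.1.2 x.2)).
- by move=> [[a b] []]; apply/binary_povm_projective/qubit_eigenproj_orthoprojector.
- move=> [[a b] o]; have [? ?] := psd_qubit_eigenvalues_ge0 (psdM a b).
  by case: o; rewrite divr_ge0.
- have -> : 1 = \tr (\sum_a \sum_b M a b) / 2 by rewrite sumM mxtrace1 divff // pnatr_eq0.
  rewrite sum_pair_bool raddf_sum mulr_suml.
  apply: eq_bigr => a _; rewrite raddf_sum mulr_suml; apply: eq_bigr => b _.
  by rewrite /w -mulrDl addrACA subrr addr0 mulrDl -splitr.
- move=> i; rewrite -(antipodal_marginals_average i rowM colM).
  rewrite (sum_pair_bool (fun a b o => w a b o *: E a b o i)).
  apply: eq_bigr => a _; apply: eq_bigr => b _.
  by rewrite (binary_povm_qubit_mixture a b i (hermM a b)).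
Qed.

Section JointObservable.
Variables (C : numClosedFieldType) (d : nat).

Definition joint_observable n n' (M : 'I_n -> 'I_n' -> 'M[C]_d)
    (A : 'I_n -> 'M[C]_d) (A' : 'I_n' -> 'M[C]_d) : Prop :=
  [/\ forall a b, psd (M a b), forall a, \sum_b M a b = A a & forall b, \sum_a M a b = A' b].

Lemma joint_observable_jointly_measurable n n' M
    (A : 'I_n -> 'M[C]_d) (A' : 'I_n' -> 'M[C]_d) :
  is_povm A -> joint_observable M A A' -> jointly_measurable A A'.
Proof.
move=> [_ sumA] [psdM rowM colM]; exists M; do !split=> //.
by under eq_bigr do rewrite rowM.
Qed.

Lemma joint_observable_postprocess k k' n n' (N : 'I_k -> 'I_k' -> 'M[C]_d) B B'
    (q : 'I_k -> 'I_n -> C) (q' : 'I_k' -> 'I_n' -> C) :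
  (forall i' a, 0 <= q i' a) -> (forall i', \sum_a q i' a = 1) ->
  (forall i'' b, 0 <= q' i'' b) -> (forall i'', \sum_b q' i'' b = 1) ->
  joint_observable N B B' ->
  joint_observable (fun a b => \sum_i' \sum_i'' (q i' a * q' i'' b) *: N i' i'')
    (fun a => \sum_i' q i' a *: B i') (fun b => \sum_i'' q' i'' b *: B' i'').
Proof.
move=> q_ge0 q_sum q'_ge0 q'_sum [psdN rowN colN]; split.
- move=> a b; apply: psd_sum => i' _; apply: psd_sum => i'' _.
  by apply: psdZ; [exact: mulr_ge0 | exact: psdN].
- move=> a; under [RHS]eq_bigr => i' _ do rewrite -rowN scaler_sumr.
  rewrite exchange_big; apply: eq_bigr => i' _ /=.
  rewrite exchange_big; apply: eq_bigr => i'' _ /=.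
  by rewrite -scaler_suml -mulr_sumr q'_sum mulr1.
- move=> b; under [RHS]eq_bigr => i'' _ do rewrite -colN scaler_sumr.
  rewrite exchange_big [RHS]exchange_big; apply: eq_bigr => i' _ /=.
  rewrite exchange_big; apply: eq_bigr => i'' _ /=.
  by rewrite -scaler_suml -mulr_suml q_sum mul1r.
Qed.

Lemma joint_observable_mixture m n n' (p : 'I_m -> C)
    (N : 'I_m -> 'I_n -> 'I_n' -> 'M[C]_d) A A' :
  (forall j, 0 <= p j) -> (forall j, joint_observable (N j) (A j) (A' j)) ->
  joint_observable (fun a b => \sum_j p j *: N j a b)
    (fun a => \sum_j p j *: A j a) (fun b => \sum_j p j *: A' j b).
Proof.
move=> p_ge0 jointN; split.
- move=> a b; apply: psd_sum => j _; apply: psdZ => //; by case: (jointN j).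
- move=> a; rewrite exchange_big; apply: eq_bigr => j _ /=.
  by rewrite -scaler_sumr; case: (jointN j) => _ -> _.
- move=> b; rewrite exchange_big; apply: eq_bigr => j _ /=.
  by rewrite -scaler_sumr; case: (jointN j) => _ _ ->.
Qed.

Lemma eq_joint_observable n n' (M : 'I_n -> 'I_n' -> 'M[C]_d) A1 A2 A1' A2' :
  A1 =1 A2 -> A1' =1 A2' -> joint_observable M A1 A1' -> joint_observable M A2 A2'.
Proof. by move=> eqA eqA' [psdM rowM colM]; split=> [//| a | b]; rewrite -?eqA -?eqA'. Qed.

End JointObservable.

Lemma projective_joint_antipodal (C : numClosedFieldType) k (B : 'I_k -> 'M[C]_2) :
  is_projective_povm B ->
  joint_observable (fun i' i'' => (\tr (B i'') - (i' == i'')%:R) *: B i') B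
    (fun i => antipodal (B i)).
Proof.
move=> [[psdB sumB] idemB]; split.
- move=> i' i''; have [<- | neq] := eqVneq i' i''.
    rewrite idempotent22_tr_sub1 //; apply: psd_scalar.
    by case: (idempotent_det (idemB i')) => ->; rewrite ?ler01.
  rewrite subr0; apply: psdZ => //; apply: orthoprojector_tr_ge0.
  by split; [exact: psd_hermitian | exact: idemB].
- move=> i'; rewrite -scaler_suml sumrB -linear_sum /= sumB mxtrace1.
  rewrite (eq_bigr (fun i'' => (i'' == i')%:R)) => [|i'' _]; last by rewrite eq_sym.
  by rewrite sumr_indicator mulr2n addrK scale1r.
- move=> i''; under eq_bigr do rewrite scalerBl.
  by rewrite sumrB -scaler_sumr sumB scalemx1 sumr_indicatorZ.
Qed.

Lemma proj_simulable_jointly_measurable (C : numClosedFieldType) n (A : 'I_n -> 'M[C]_2) :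
  is_povm A -> proj_simulable A -> jointly_measurable A (fun i => antipodal (A i)).
Proof.
move=> povmA [m [k [B [p [q [projB [p_ge0 [_ [q_ge0 [q_sum defA]]]]]]]]]].
apply: (joint_observable_jointly_measurable povmA).
apply: eq_joint_observable (joint_observable_mixture p_ge0 (fun j =>
  joint_observable_postprocess (q_ge0 j) (q_sum j) (q_ge0 j) (q_sum j)
    (projective_joint_antipodal (projB j)))) => [a | b] /=; first by rewrite defA.
rewrite defA [RHS]linear_sum; apply: eq_bigr => j _.
rewrite [RHS]linearZ; congr (_ *: _); rewrite linear_sum; apply: eq_bigr => i' _.
by rewrite [RHS]linearZ.
Qed.

Theorem theorem1 (C : numClosedFieldType) (n : nat) (A : 'I_n -> 'M[C]_2) :
  is_povm A ->
  (proj_simulable A <-> jointly_measurable A (fun i => antipodal (A i))).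
Proof.
move=> povmA; split; first exact: proj_simulable_jointly_measurable.
exact: jointly_measurable_proj_simulable.
Qed.
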